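(* Let $G$ be an almost well-covered $\{C_3,C_4,C_5,C_7\}$-free graph with no vertex of type $2$. Then every connected component of $G_0$ is isomorphic to one of $P_1$, $P_2$, $P_3$, $P_4$, $P_5$, $P_6$, $P_7$, $P_8$, $P_{10}$, $C_6$, $C_8$, $C_9$, $C_{10}$, $C_{11}$, $C_{13}$.
   Context: All graphs are finite and simple. $P_n$ and $C_n$ denote the path and cycle on $n$ vertices; $G$ is $\{C_3,C_4,C_5,C_7\}$-free if it has no induced subgraph isomorphic to any of these cycles. For a graph $G$, $\alpha(G)$ is the maximum size of an independent set and $i(G)$ the minimum size of an inclusion-maximal independent set; $G$ is almost well-covered if $\alpha(G)-i(G)=1$. Types of vertices: let $U$ be the set of vertices of $G$ whose connected component is a complete graph. In $G-U$, vertices of degree $1$ are leaves and the others are internal vertices. An internal vertex adjacent to exactly $k$ leaves is of type $k$; every vertex of $U$ is of type $0$. $G_0$ denotes the subgraph of $G$ induced by all vertices of type $0$. *)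

(* A finite simple graph is a symmetric irreflexive relation
   e : rel T on a finType T. *)
From mathcomp Require Import all_boot.
Set Implicit Arguments. Unset Strict Implicit. Unset Printing Implicit Defensive.

Section Graphs.
Variables (T : finType) (e : rel T).

Definition path_adj (i j : nat) : bool := (j == i.+1) || (i == j.+1).
Definition cyc_adj (k : nat) (i j : nat) : bool :=
  (j == i.+1 %% k) || (i == j.+1 %% k).

Definition has_induced (n : nat) (adj : nat -> nat -> bool) : Prop :=
  exists f : 'I_n -> T, injective f /\ forall i j : 'I_n, e (f i) (f j) = adj i j.

Definition induced_iso (V : {set T}) (n : nat) (adj : nat -> nat -> bool) : Prop :=
  exists f : 'I_n -> T, [/\ injective f, V = f @: [set: 'I_n] &
    forall i j : 'I_n, e (f i) (f j) = adj i j].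

Definition independent (A : {set T}) : bool :=
  [forall x in A, forall y in A, ~~ e x y].

Definition maximal_independent (A : {set T}) : Prop :=
  independent A /\ forall B : {set T}, independent B -> A \subset B -> B = A.

Definition alpha : nat := \max_(A : {set T} | independent A) #|A|.

(* i(G): minimum size of an inclusion-maximal independent set *)
Definition indep_dom : nat :=
  \big[minn/#|T|]_(A : {set T} | [forall B : {set T},
      (independent B && (A \subset B)) ==> (B == A)] && independent A) #|A|.

Definition almost_well_covered : Prop := alpha - indep_dom = 1.

Definition restr (S : {set T}) : rel T := fun u v => [&& u \in S, v \in S & e u v].
Definition comp_in (S : {set T}) (x : T) : {set T} := [set y | connect (restr S) x y].

Definition Uset : {set T} :=
  [set x | [forall y in comp_in setT x, forall z in comp_in setT x,
             (y != z) ==> e y z]].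

Definition degGU (x : T) : nat := #|[set y in ~: Uset | e x y]|.
Definition is_leaf (x : T) : bool := (x \notin Uset) && (degGU x == 1).
Definition is_internal (x : T) : bool := (x \notin Uset) && (degGU x != 1).

Definition is_type (x : T) (k : nat) : bool :=
  ((x \in Uset) && (k == 0)) ||
  (is_internal x && (#|[set y in ~: Uset | e x y && is_leaf y]| == k)).

Definition G0set : {set T} := [set x | is_type x 0].

End Graphs.

(* Let H be a component of G_0. A vertex outside H adjacent to H is a support
   vertex (a vertex outside G_0 with a leaf neighbour), and a leaf is adjacent
   only to its support vertex. So if an independent set K of G meets H in S and
   dominates H, replacing S by any independent J in H and every support vertex
   of K by one of its leaves gives an independent set of size at least
   |K| - |S| + |J|; as alpha <= i + 1 and i <= |K| for maximal K, |J| <= |S| + 1.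
   Choosing S and J around a vertex v of H, with the forbidden cycles C_3, C_4,
   C_5, C_7 controlling the first three distance layers from v, shows that H has
   maximum degree 2, so H is a path or a cycle; explicit windows of P_9, P_11,
   C_12 and of longer cycles violate the bound, and C_3, C_4, C_5, C_7 are
   excluded directly. *)

From mathcomp Require Import all_boot zify.
Set Implicit Arguments. Unset Strict Implicit. Unset Printing Implicit Defensive.

Lemma cardsU_disjoint (T : finType) (A B : {set T}) :
  [disjoint A & B] -> #|A :|: B| = #|A| + #|B|.
Proof. by move=> dAB; apply/eqP; rewrite (leq_card_setU A B). Qed.

Lemma bigmin_leq (I : finType) (P : pred I) (F : I -> nat) x i :
  P i -> \big[minn/x]_(j | P j) F j <= F i.
Proof.
move=> Pi; rewrite /index_enum; have : i \in Finite.enum I by rewrite -enumT mem_enum.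
elim: (Finite.enum I) => [//|a r IHr]; rewrite big_cons in_cons => /orP [/eqP <-|ir].
  by rewrite Pi geq_minl.
by case: (P a); [apply: leq_trans (geq_minr _ _) (IHr ir) | exact: IHr].
Qed.

Section Independence.
Variables (T : finType) (e : rel T).
Hypothesis e_sym : symmetric e.
Hypothesis e_irr : irreflexive e.

Lemma independentP (A : {set T}) :
  reflect {in A &, forall x y, ~~ e x y} (independent e A).
Proof.
apply: (iffP forall_inP) => [indA x y xA yA | indA x xA].
  by move/forall_inP: (indA x xA); apply.
by apply/forall_inP => y yA; apply: indA.
Qed.

Lemma independent0 : independent e set0.
Proof. by apply/independentP => x y; rewrite inE. Qed.

Lemma independent1 x : independent e [set x].
Proof. by apply/independentP => a b /set1P -> /set1P ->; rewrite e_irr. Qed.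

Lemma independentS (A B : {set T}) : A \subset B -> independent e B -> independent e A.
Proof.
by move=> /subsetP sAB /independentP indB; apply/independentP => x y /sAB xB /sAB; apply: indB.
Qed.

Lemma independentU (A B : {set T}) : independent e A -> independent e B ->
  {in A & B, forall a b, ~~ e a b} -> independent e (A :|: B).
Proof.
move=> /independentP indA /independentP indB AB.
apply/independentP => x y /setUP [xA|xB] /setUP [yA|yB]; try by [apply: indA|apply: indB].
  exact: AB.
by rewrite e_sym; apply: AB.
Qed.

Definition dominates (D A : {set T}) :=
  forall a, a \in A -> a \notin D -> exists2 d, d \in D & e a d.

Lemma maximal_independent_extension (D C : {set T}) : C \subset D -> independent e C ->
  exists2 S : {set T}, [/\ C \subset S, S \subset D & independent e S] & dominates S D.
Proof.
move=> CD indC.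
pose P (S : {set T}) := [&& C \subset S, S \subset D & independent e S].
have PC : P C by rewrite /P CD indC subxx.
case: (arg_maxnP (fun S : {set T} => #|S|) PC) => S /and3P [CS SD indS] Smax.
exists S => // d dD dS; apply/exists_inP; apply: contraT => noNbr.
have : P (d |: S).
  rewrite /P (subset_trans CS (subsetUr _ _)) subUset sub1set dD SD /=.
  rewrite independentU ?independent1 // => _ s /set1P -> sS.
  by apply: contra noNbr => ds; apply/exists_inP; exists s.
by move/Smax; rewrite cardsU1 dS; lia.
Qed.

Lemma indep_dom_leq (K : {set T}) :
  independent e K -> dominates K [set: T] -> indep_dom e <= #|K|.
Proof.
move=> indK domK; apply: (bigmin_leq (fun A : {set T} => #|A|)); rewrite indK andbT.
apply/forallP => B; apply/implyP => /andP [indB KB].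
rewrite eqEsubset KB andbT; apply/subsetP => b bB; apply: contraT => bK.
have [s sK bs] := domK b (in_setT b) bK.
by move/independentP: indB => /(_ b s bB (subsetP KB s sK)); rewrite bs.
Qed.

Lemma leq_card_alpha (A : {set T}) : independent e A -> #|A| <= alpha e.
Proof. exact: (@leq_bigmax_cond _ (independent e) (fun A : {set T} => #|A|)). Qed.

End Independence.

Section Leaves.
Variables (T : finType) (e : rel T).
Hypothesis e_sym : symmetric e.

Local Notation U := (Uset e).
Local Notation G0 := (G0set e).

Lemma Uset_edge a b : e a b -> (a \in U) = (b \in U).
Proof.
move=> eab; suff ab_comp : comp_in e setT a = comp_in e setT b by rewrite !inE ab_comp.
have ab : connect (restr e setT) a b by apply: connect1; rewrite /restr !inE eab.
have csym : connect_sym (restr e setT).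
  by apply: sym_connect_sym => x y; rewrite /restr !inE e_sym.
by apply/setP => z; rewrite !inE; apply/idP/idP; apply: connect_trans; rewrite // csym.
Qed.

Lemma leaf_nbr_uniq l u u' : is_leaf e l -> e l u -> e l u' -> u = u'.
Proof.
case/andP => lU /cards1P [c Nl] lu lu'.
have nbrP w : e l w -> w \in [set y in ~: U | e l y].
  by move=> lw; rewrite in_set in_setC lw -(Uset_edge lw) lU.
by move: (nbrP u lu) (nbrP u' lu'); rewrite Nl => /set1P -> /set1P ->.
Qed.

Lemma leaf_notin_G0 l : is_leaf e l -> l \notin G0.
Proof. by case/andP => lU d1; rewrite inE /is_type (negbTE lU) /is_internal lU d1. Qed.

Lemma G0_leaf_nonadj h l : h \in G0 -> is_leaf e l -> ~~ e h l.
Proof.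
rewrite inE /is_type => /orP [/andP [hU _]|/andP [/andP [hU _] /eqP noLeaf]] lleaf.
  by apply: contraL lleaf => hl; rewrite /is_leaf -(Uset_edge hl) hU.
apply/negP => hl; have := card0_eq noLeaf l.
by rewrite in_set in_setC hl lleaf -(Uset_edge hl) hU.
Qed.

Definition support_vertex x := (x \notin G0) && ~~ is_leaf e x.
Definition leaves_at (X : {set T}) := [set l | is_leaf e l && [exists x in X, e x l]].

Lemma support_vertex_leaf x : support_vertex x -> exists2 l, is_leaf e l & e x l.
Proof.
rewrite /support_vertex inE /is_type /is_leaf negb_or => /andP [/andP [xU0 xtype] xleaf].
have xU : x \notin U by apply: contra xU0 => ->.
move: xtype; rewrite /is_internal xU /=; move: xleaf; rewrite xU /= => -> /=.
by rewrite -lt0n => /card_gt0P [l]; rewrite inE => /and3P [_ xl ll]; exists l.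
Qed.

Lemma card_leaves_at (X : {set T}) :
  {subset X <= support_vertex} -> #|X| <= #|leaves_at X|.
Proof.
move=> Xsupp; pose nbr l := odflt l [pick u | e l u].
apply: leq_trans (leq_imset_card nbr _); apply/subset_leq_card/subsetP => x xX.
have [l ll xl] := support_vertex_leaf (Xsupp x xX).
apply/imsetP; exists l; first by rewrite inE ll; apply/exists_inP; exists x.
rewrite /nbr; case: pickP => [u lu|noNbr] /=; first by apply: leaf_nbr_uniq ll _ _; rewrite // e_sym.
by move: (noNbr x); rewrite e_sym xl.
Qed.

End Leaves.

Section Exchange.
Variables (T : finType) (e : rel T).
Hypothesis e_sym : symmetric e.
Hypothesis e_irr : irreflexive e.

Local Notation G0 := (G0set e).

Variable H : {set T}.
Hypothesis HG0 : H \subset G0.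
Hypothesis H_closed : forall h t, h \in H -> t \in G0 -> e h t -> t \in H.

Section Trade.
Variables (K J : {set T}).
Hypothesis indK : independent e K.
Hypothesis JH : J \subset H.
Hypothesis indJ : independent e J.

(* The vertices of [K] outside [H] are either support vertices, gathered in [X]
   and traded for their leaves [L], or vertices of [R], with no neighbour in [H]. *)
Let X := [set u in K | support_vertex e u].
Let R := [set u in K | (u \notin H) && ~~ support_vertex e u].
Let L := leaves_at e X.

Let JG0 j : j \in J -> j \in G0.
Proof. by move/(subsetP JH)/(subsetP HG0). Qed.

Let Lleaf l : l \in L -> is_leaf e l.
Proof. by rewrite inE => /andP []. Qed.

Let LX l : l \in L -> exists2 x, x \in X & e x l.
Proof. by rewrite inE => /andP [_ /exists_inP]. Qed.

Let RK r : r \in R -> r \in K.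
Proof. by rewrite inE => /andP []. Qed.

Lemma trade_independent : independent e (J :|: R :|: L).
Proof.
have indR : independent e R by apply: independentS indK; apply/subsetP => r /RK.
have indL : independent e L.
  apply/independentP => l l' lL l'L; apply/negP => ll'.
  have [x + xl] := LX lL; rewrite inE => /andP [_ /andP [_]].
  by rewrite (leaf_nbr_uniq e_sym (Lleaf lL) (_ : e l x) ll') ?Lleaf // e_sym.
have nJR : {in J & R, forall j r, ~~ e j r}.
  move=> j r jJ; rewrite inE => /and3P [_ rH rsupp]; apply/negP => jr.
  case: (boolP (r \in G0)) => rG0.
    by rewrite (H_closed (subsetP JH j jJ) rG0 jr) in rH.
  have rleaf : is_leaf e r by move: rsupp; rewrite /support_vertex rG0 negbK.
  by move: (G0_leaf_nonadj e_sym (JG0 jJ) rleaf); rewrite jr.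
have nJRL : {in J :|: R & L, forall u l, ~~ e u l}.
  move=> u l /setUP [uJ|uR] lL; first exact: G0_leaf_nonadj (JG0 uJ) (Lleaf lL).
  apply/negP => ul; have [x xX xl] := LX lL.
  have ux : u = x by apply: (leaf_nbr_uniq e_sym (Lleaf lL)); rewrite e_sym.
  by move: uR xX; rewrite ux !inE => /and3P [_ _ /negP xsupp] /andP [_ /xsupp].
by rewrite !independentU.
Qed.

Lemma card_trade : #|J :|: R :|: L| = #|J| + #|R| + #|L|.
Proof.
have dJR : [disjoint J & R].
  by rewrite disjoint_subset; apply/subsetP => u /(subsetP JH) uH; rewrite !inE uH andbF.
have dJRL : [disjoint J :|: R & L].
  rewrite disjoint_subset; apply/subsetP => u uJR; rewrite inE; apply/negP => uL.
  case/setUP: uJR => [uJ|uR]; first by move: (leaf_notin_G0 (Lleaf uL)); rewrite JG0.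
  have [x + xu] := LX uL; rewrite inE => /andP [xK _].
  by move/independentP: indK => /(_ x u xK (RK uR)); rewrite xu.
by rewrite !cardsU_disjoint.
Qed.

Lemma maximal_exchange : #|J| + #|K| <= alpha e + #|K :&: H|.
Proof.
have cardX : #|X| <= #|L| by apply: card_leaves_at => // x; rewrite inE => /andP [].
have cardK : #|K| <= #|K :&: H| + #|X| + #|R|.
  have KXR : K \subset (K :&: H) :|: X :|: R.
    apply/subsetP => u uK; rewrite !inE uK /=.
    by case: (u \in H); case: (support_vertex e u).
  apply: leq_trans (subset_leq_card KXR) _; apply: leq_trans (leq_card_setU _ _) _.
  by rewrite leq_add2r leq_card_setU.
have := leq_card_alpha trade_independent; rewrite card_trade.
by move: cardX cardK; clear; lia.
Qed.

End Trade.

Hypothesis awc : almost_well_covered e.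

Lemma exchange_bound (S W J : {set T}) :
  S \subset H -> [disjoint W & H] -> independent e (S :|: W) -> dominates e (S :|: W) H ->
  J \subset H -> independent e J -> #|J| <= #|S| + 1.
Proof.
move=> SH dWH indSW domSW JH indJ.
have [K [SWK _ indK] domK] := maximal_independent_extension e_sym e_irr (subsetT (S :|: W)) indSW.
have KH : K :&: H = S.
  apply/setP => u; rewrite inE; apply/andP/idP => [[uK uH]|uS].
    apply: contraT => uS; have uSW : u \notin S :|: W.
      by rewrite inE negb_or uS (disjointFl dWH uH).
    have [w wSW uw] := domSW u uH uSW.
    by move/independentP: indK => /(_ u w uK (subsetP SWK w wSW)); rewrite uw.
  by rewrite (subsetP SH u uS) (subsetP SWK) // inE uS.
have := maximal_exchange indK JH indJ; have := indep_dom_leq indK domK.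
by move: awc; rewrite /almost_well_covered KH; lia.
Qed.

Definition avoiding (W : {set T}) := [set h in H | [forall w in W, ~~ e h w]].

(* Extend [C] to a maximal independent set [S] of [avoiding W] and exchange the
   part [S :&: R] of [S], which coincides with [C :&: R], for [J]. *)
Lemma local_exchange_bound (W C R J : {set T}) :
  [disjoint W & H] -> independent e W ->
  C \subset avoiding W -> independent e C -> R \subset H -> dominates e C (R :&: avoiding W) ->
  J \subset R -> independent e J ->
  (forall j u, j \in J -> u \in H :\: R -> e j u -> exists2 c, c \in C & e u c) ->
  #|J| <= #|C :&: R| + 1.
Proof.
move=> dWH indW CA indC RH domC JR indJ Jout.
have [S [CS SA indS] domS] := maximal_independent_extension e_sym e_irr CA indC.
have SH : S \subset H by apply: subset_trans SA _; apply/subsetP => x; rewrite inE => /andP [].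
have SR : S :&: R = C :&: R.
  apply/setP => x; rewrite !inE andbC [in RHS]andbC; case: (boolP (x \in R)) => //= xR.
  apply/idP/idP => [xS|/(subsetP CS)//]; apply: contraT => xC.
  have xRA : x \in R :&: avoiding W by rewrite inE xR (subsetP SA x xS).
  have [c cC xc] := domC x xRA xC.
  by move/independentP: indS => /(_ x c xS (subsetP CS c cC)); rewrite xc.
have indSW : independent e (S :|: W).
  rewrite independentU // => s w /(subsetP SA); rewrite inE => /andP [_ /forall_inP].
  exact.
have domSW : dominates e (S :|: W) H.
  move=> h hH; rewrite inE negb_or => /andP [hS _].
  case: (boolP (h \in avoiding W)) => hA.
    by have [s sS hs] := domS h hA hS; exists s => //; rewrite inE sS.
  move: hA; rewrite inE hH => /forall_inPn [w wW]; rewrite negbK => hw.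
  by exists w => //; rewrite inE wW orbT.
have indSJ : independent e ((S :\: R) :|: J).
  rewrite independentU ?(independentS (subsetDl S R)) // => s j /setDP [sS sR] jJ.
  apply/negP => sj; have sHR : s \in H :\: R by rewrite inE sR (subsetP SH).
  have [c cC sc] := Jout j s jJ sHR (etrans (e_sym j s) sj).
  by move/independentP: indS => /(_ s c sS (subsetP CS c cC)); rewrite sc.
have := exchange_bound SH dWH indSW domSW _ indSJ.
rewrite subUset (subset_trans (subsetDl _ _) SH) (subset_trans JR RH) cardsU_disjoint.
  by rewrite -(cardsID R S) SR [_ + #|S :\: R|]addnC -addnA leq_add2l; apply.
by rewrite disjoint_subset; apply/subsetP => x /setDP [_ xR]; rewrite inE; apply: contra xR => /(subsetP JR).
Qed.

End Exchange.

Section ShortCycles.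
Variables (T : finType) (e : rel T).
Hypothesis e_sym : symmetric e.
Hypothesis e_irr : irreflexive e.
Hypothesis free : forall k, k \in [:: 3; 4; 5; 7] -> ~ has_induced e k (cyc_adj k).

Lemma no_induced_cycle k (s : seq T) x0 : k \in [:: 3; 4; 5; 7] -> size s = k -> uniq s ->
  (forall i j, i < k -> j < k -> e (nth x0 s i) (nth x0 s j) = cyc_adj k i j) -> False.
Proof.
move=> kin sz us adj; apply: (free kin); exists (fun i : 'I_k => nth x0 s i); split.
  by move=> i j /eqP; rewrite nth_uniq ?sz // => /eqP /val_inj.
by move=> i j; apply: adj.
Qed.

Lemma adj_neq a b : e a b -> a != b.
Proof. by apply: contraTneq => ->; rewrite e_irr. Qed.

Ltac adjacency_by_hyps :=
  lazymatch goal with |- ?l = ?b => let b' := eval vm_compute in b in change (l = b') end;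
  first [ by rewrite e_irr | assumption | by rewrite e_sym | by apply/negbTE
        | by apply/negbTE; rewrite e_sym ].

Ltac distinct_by_hyps := rewrite ?inE ?negb_or; repeat (apply/andP; split);
  first [ assumption | by rewrite eq_sym | by apply: adj_neq | by rewrite eq_sym; apply: adj_neq
        | by [] ].

Lemma no_C3 a b c : e a b -> e b c -> e c a -> False.
Proof.
move=> ab bc ca; apply: (@no_induced_cycle 3 [:: a; b; c] a) => //=; first by distinct_by_hyps.
move=> i j; case: i => [|[|[|i]]] //; case: j => [|[|[|j]]] //= *; adjacency_by_hyps.
Qed.

Lemma no_chord2 a b c : e a b -> e b c -> ~~ e a c.
Proof. by move=> ab bc; apply/negP => ac; apply: no_C3 ab bc _; rewrite e_sym. Qed.

Lemma no_C4 a b c d : e a b -> e b c -> e c d -> e d a -> a != c -> b != d -> False.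
Proof.
move=> ab bc cd da ac bd.
have nac := no_chord2 ab bc; have nbd := no_chord2 bc cd.
apply: (@no_induced_cycle 4 [:: a; b; c; d] a) => //=; first by distinct_by_hyps.
move=> i j; case: i => [|[|[|[|i]]]] //; case: j => [|[|[|[|j]]]] //= *; adjacency_by_hyps.
Qed.

Lemma no_chord3 a b c d : e a b -> e b c -> e c d -> a != c -> b != d -> ~~ e a d.
Proof. by move=> ab bc cd ac bd; apply/negP => ad; apply: no_C4 ab bc cd _ ac bd; rewrite e_sym. Qed.

Lemma no_C5 a b c d f : e a b -> e b c -> e c d -> e d f -> e f a ->
  a != c -> a != d -> b != d -> b != f -> c != f -> False.
Proof.
move=> ab bc cd df fa ac ad bd bf cf.
have nac := no_chord2 ab bc; have nbd := no_chord2 bc cd; have ncf := no_chord2 cd df.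
have nda := no_chord2 df fa; have nfb := no_chord2 fa ab.
apply: (@no_induced_cycle 5 [:: a; b; c; d; f] a) => //=; first by distinct_by_hyps.
move=> i j; case: i => [|[|[|[|[|i]]]]] //; case: j => [|[|[|[|[|j]]]]] //= *; adjacency_by_hyps.
Qed.

(* A chord of the 7-cycle would close a triangle or a 4-cycle. *)
Lemma no_C7 a0 a1 a2 a3 a4 a5 a6 :
  e a0 a1 -> e a1 a2 -> e a2 a3 -> e a3 a4 -> e a4 a5 -> e a5 a6 -> e a6 a0 ->
  a0 != a2 -> a0 != a3 -> a0 != a4 -> a0 != a5 ->
  a1 != a3 -> a1 != a4 -> a1 != a5 -> a1 != a6 ->
  a2 != a4 -> a2 != a5 -> a2 != a6 -> a3 != a5 -> a3 != a6 -> a4 != a6 -> False.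
Proof.
move=> e01 e12 e23 e34 e45 e56 e60 n02 n03 n04 n05 n13 n14 n15 n16 n24 n25 n26 n35 n36 n46.
have c02 := no_chord2 e01 e12; have c13 := no_chord2 e12 e23; have c24 := no_chord2 e23 e34.
have c35 := no_chord2 e34 e45; have c46 := no_chord2 e45 e56; have c50 := no_chord2 e56 e60.
have c61 := no_chord2 e60 e01.
have n50 : a5 != a0 by rewrite eq_sym.
have n61 : a6 != a1 by rewrite eq_sym.
have c03 := no_chord3 e01 e12 e23 n02 n13; have c14 := no_chord3 e12 e23 e34 n13 n24.
have c25 := no_chord3 e23 e34 e45 n24 n35; have c36 := no_chord3 e34 e45 e56 n35 n46.
have c40 := no_chord3 e45 e56 e60 n46 n50; have c51 := no_chord3 e56 e60 e01 n50 n61.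
have c62 := no_chord3 e60 e01 e12 n61 n02.
apply: (@no_induced_cycle 7 [:: a0; a1; a2; a3; a4; a5; a6] a0) => //=; first by distinct_by_hyps.
move=> i j; case: i => [|[|[|[|[|[|[|i]]]]]]] //; case: j => [|[|[|[|[|[|[|j]]]]]]] //= *.
all: adjacency_by_hyps.
Qed.

End ShortCycles.

Section Layers.
Variables (T : finType) (e : rel T).
Hypothesis e_sym : symmetric e.
Hypothesis e_irr : irreflexive e.
Hypothesis free : forall k, k \in [:: 3; 4; 5; 7] -> ~ has_induced e k (cyc_adj k).

Variables (H : {set T}) (v : T).
Hypothesis vH : v \in H.

Definition layer1 := [set u in H | e v u].
Definition layer2 := [set u in H | [&& u != v, u \notin layer1 & [exists x in layer1, e x u]]].
Definition ball2 := v |: (layer1 :|: layer2).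
Definition layer3 := [set u in H | (u \notin ball2) && [exists y in layer2, e y u]].
Definition dead_ends := [set y in layer2 | [forall u in H, e y u ==> (u \in layer1)]].

Lemma layer1P x : x \in layer1 -> (x \in H) * e v x.
Proof. by rewrite inE => /andP [-> ->]. Qed.

Lemma layer2P y :
  y \in layer2 -> [/\ y \in H, y != v, y \notin layer1 & exists2 x, x \in layer1 & e x y].
Proof. by rewrite inE => /andP [yH /and3P [yv yX /exists_inP]]. Qed.

Lemma layer3P z : z \in layer3 -> [/\ z \in H, z \notin ball2 & exists2 y, y \in layer2 & e y z].
Proof. by rewrite inE => /andP [zH /andP [zR /exists_inP]]. Qed.

Lemma dead_endP y :
  y \in dead_ends -> (y \in layer2) * (forall u, u \in H -> e y u -> u \in layer1).
Proof.
rewrite inE => /andP [yY /forall_inP yend]; split => // u uH yu.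
by move: (yend u uH); rewrite yu.
Qed.

Lemma root_notin_layer2 : v \notin layer2. Proof. by rewrite inE eqxx andbF. Qed.
Lemma root_in_ball2 : v \in ball2. Proof. by rewrite /ball2 in_setU1 eqxx. Qed.
Lemma layer1_ball2 x : x \in layer1 -> x \in ball2.
Proof. by move=> xX; rewrite /ball2 in_setU1 in_setU xX orbT. Qed.
Lemma layer2_ball2 y : y \in layer2 -> y \in ball2.
Proof. by move=> yY; rewrite /ball2 in_setU1 in_setU yY !orbT. Qed.

Lemma neq_mem (A : {set T}) a b : a \in A -> b \notin A -> a != b.
Proof. by move=> aA; apply: contraNneq => <-. Qed.

Ltac distinct_by_layers := first [ assumption | by rewrite eq_sym
  | by apply: (neq_mem (A := layer1)) | by rewrite eq_sym; apply: (neq_mem (A := layer1))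
  | by apply: (neq_mem (A := layer2)) | by rewrite eq_sym; apply: (neq_mem (A := layer2))
  | by apply: (neq_mem (A := ball2)) | by rewrite eq_sym; apply: (neq_mem (A := ball2))
  | by apply: (neq_mem (A := H)) | by rewrite eq_sym; apply: (neq_mem (A := H)) ].

Lemma layer1_independent : independent e layer1.
Proof.
apply/independentP => x x' /layer1P [_ vx] /layer1P [_ vx'].
by rewrite (no_chord2 e_sym e_irr free (_ : e x v) vx') // e_sym.
Qed.

Lemma layer1_common_nbr x x' u :
  x \in layer1 -> x' \in layer1 -> e x u -> e x' u -> u != v -> x != x' -> False.
Proof.
move=> /layer1P [_ vx] /layer1P [_ vx'] xu x'u uv xx'.
by apply: (no_C4 e_sym e_irr free vx xu (_ : e u x') (_ : e x' v)); rewrite 1?e_sym // eq_sym.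
Qed.

Lemma layer2_independent : independent e layer2.
Proof.
apply/independentP => y y' yY y'Y; apply/negP => yy'.
have [yH yv yX [x xX xy]] := layer2P yY.
have [y'H y'v y'X [x' x'X x'y']] := layer2P y'Y.
have [_ vx] := layer1P xX; have [_ vx'] := layer1P x'X.
have [E|xx'] := eqVneq x x'.
  by subst x'; apply: (no_C3 e_sym e_irr free xy yy'); rewrite e_sym.
apply: (no_C5 e_sym e_irr free vx xy yy' (_ : e y' x') (_ : e x' v));
  rewrite 1?e_sym //; distinct_by_layers.
Qed.

Lemma layer3_independent : independent e layer3.
Proof.
apply/independentP => z z' zZ z'Z; apply/negP => zz'.
have [zH zR [y yY yz]] := layer3P zZ.
have [z'H z'R [y' y'Y y'z']] := layer3P z'Z.
have [yH yv yX [x xX xy]] := layer2P yY.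
have [y'H y'v y'X [x' x'X x'y']] := layer2P y'Y.
have yR := layer2_ball2 yY; have y'R := layer2_ball2 y'Y.
have xR := layer1_ball2 xX; have x'R := layer1_ball2 x'X; have vR := root_in_ball2.
have [E|yy'] := eqVneq y y'.
  by subst y'; apply: (no_C3 e_sym e_irr free yz zz'); rewrite e_sym.
have [E|xx'] := eqVneq x x'.
  subst x'; apply: (no_C5 e_sym e_irr free xy yz zz' (_ : e z' y') (_ : e y' x));
    rewrite 1?e_sym //; distinct_by_layers.
have [_ vx] := layer1P xX; have [_ vx'] := layer1P x'X.
apply: (no_C7 e_sym e_irr free vx xy yz zz' (_ : e z' y') (_ : e y' x') (_ : e x' v));
  rewrite 1?e_sym //; distinct_by_layers.
Qed.

Lemma outer_nbr_nonadj_root w y : w \notin H -> y \in dead_ends -> e w y -> ~~ e w v.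
Proof.
move=> wH /dead_endP [yY _] wy; apply/negP => wv.
have [yH yv yX [x xX xy]] := layer2P yY.
have [xH vx] := layer1P xX.
apply: (no_C4 e_sym e_irr free wy (_ : e y x) (_ : e x v) (_ : e v w));
  rewrite 1?e_sym //; distinct_by_layers.
Qed.

Lemma outer_nbr_nonadj_layer3 w y z :
  w \notin H -> y \in dead_ends -> e w y -> z \in layer3 -> ~~ e w z.
Proof.
move=> wH /dead_endP [yY yend] wy zZ; apply/negP => wz.
have [zH zR [y' y'Y y'z]] := layer3P zZ.
have [yH yv yX [x xX xy]] := layer2P yY.
have [y'H y'v y'X [x' x'X x'y']] := layer2P y'Y.
have yR := layer2_ball2 yY; have y'R := layer2_ball2 y'Y.
have xR := layer1_ball2 xX; have x'R := layer1_ball2 x'X; have vR := root_in_ball2.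
have yy' : y != y'.
  by apply: contraNneq zR => yy'; rewrite layer1_ball2 // yend // yy'.
have [xH vx] := layer1P xX; have [x'H vx'] := layer1P x'X.
have [E|xx'] := eqVneq x x'.
  subst x'; apply: (no_C5 e_sym e_irr free wy (_ : e y x) x'y' y'z (_ : e z w));
    rewrite 1?e_sym //; distinct_by_layers.
apply: (no_C7 e_sym e_irr free wy (_ : e y x) (_ : e x v) vx' x'y' y'z (_ : e z w));
  rewrite 1?e_sym //; distinct_by_layers.
Qed.

Lemma ball2_sub : ball2 \subset H.
Proof. by apply/subsetP => r /setU1P [->|/setUP [/layer1P []|/layer2P []]]. Qed.

Lemma ball2_nbr j u : j \in v |: (layer1 :|: dead_ends) -> u \in H -> e j u -> u \in ball2.
Proof.
move=> jS uH; case/setU1P: jS => [->|/setUP [jX|/dead_endP [_ jend]]] ju.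
- by apply: layer1_ball2; rewrite inE uH ju.
- apply: contraT => uR; have uv : u != v by apply: contraNneq uR => ->; apply: root_in_ball2.
  have uY : u \in layer2.
    by rewrite inE uH uv (contra (@layer1_ball2 u) uR); apply/exists_inP; exists j.
  by rewrite (layer2_ball2 uY) in uR.
- exact/layer1_ball2/jend.
Qed.

Definition anchor (W : {set T}) := v |: (layer3 :|: (dead_ends :&: avoiding e H W)).

Lemma anchor_independent W : independent e (anchor W).
Proof.
have vZ z : z \in layer3 -> ~~ e v z.
  move=> /layer3P [zH zR _]; apply: contra zR => vz.
  by apply: layer1_ball2; rewrite inE zH vz.
have vY y : y \in layer2 -> ~~ e v y.
  by move=> /layer2P [yH _ yX _]; apply: contra yX => vy; rewrite inE yH vy.
have ZY z y : z \in layer3 -> y \in dead_ends -> ~~ e z y.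
  move=> /layer3P [zH zR _] /dead_endP [_ yend]; apply: contra zR => zy.
  by apply/layer1_ball2/yend; rewrite // e_sym.
have indY0 : independent e (dead_ends :&: avoiding e H W).
  apply: independentS layer2_independent; apply/subsetP => y /setIP [/dead_endP [] //].
rewrite independentU ?independent1 ?independentU ?layer3_independent //.
- by move=> z y zZ /setIP [yY0 _]; apply: ZY.
- move=> _ u /set1P -> /setUP [uZ|/setIP [/dead_endP [uY _] _]]; [exact: vZ | exact: vY].
Qed.

Lemma card_anchor_ball2 W : #|anchor W :&: ball2| <= #|dead_ends :&: avoiding e H W| + 1.
Proof.
have sub : anchor W :&: ball2 \subset v |: (dead_ends :&: avoiding e H W).
  apply/subsetP => x /setIP [/setU1P [->|/setUP [/layer3P [_ xR _]|xY0]] xB].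
  - exact: setU11.
  - by rewrite xB in xR.
  - by rewrite setU1r.
by apply: leq_trans (subset_leq_card sub) _; rewrite cardsU1 addnC leq_add2l leq_b1.
Qed.

Lemma anchor_dominates W : dominates e (anchor W) (ball2 :&: avoiding e H W).
Proof.
move=> r /setIP [/setU1P [->|/setUP [rX|rY]] rA] rC; first by rewrite setU11 in rC.
  by exists v; [exact: setU11 | have [_ ?] := layer1P rX; rewrite e_sym].
case: (boolP (r \in dead_ends)) => rY0.
  by rewrite /anchor in_setU1 in_setU in_setI rY0 rA !orbT in rC.
have [rH rv rX _] := layer2P rY.
move: rY0; rewrite inE rY /= => /forall_inPn [u uH]; rewrite negb_imply => /andP [ru uX].
exists u => //; rewrite /anchor in_setU1 in_setU; apply/orP; right; apply/orP; left.
rewrite inE uH /=; apply/andP; split; last by apply/exists_inP; exists r.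
rewrite /ball2 in_setU1 in_setU (negbTE uX) /= negb_or; apply/andP; split.
  by apply: contra rX => /eqP uv; rewrite inE rH -uv e_sym ru.
by apply: contraL ru => uY; move/independentP: layer2_independent; apply.
Qed.

Hypothesis awc : almost_well_covered e.
Hypothesis HG0 : H \subset G0set e.
Hypothesis H_closed : forall h t, h \in H -> t \in G0set e -> e h t -> t \in H.

(* [anchor W] dominates [ball2] away from [W] and meets it only in [v] and the
   dead ends, while [J] has no neighbour in [H] outside [ball2]. *)
Lemma layer_bound (W J : {set T}) :
  [disjoint W & H] -> {in W, forall w, exists2 y, y \in dead_ends & e w y} -> independent e W ->
  J \subset v |: (layer1 :|: dead_ends) -> independent e J ->
  #|J| <= #|dead_ends :&: avoiding e H W| + 2.
Proof.
move=> dWH Wnbr indW JS indJ.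
have anchorA : anchor W \subset avoiding e H W.
  apply/subsetP => x /setU1P [->|/setUP [xZ|/setIP [_ //]]]; rewrite inE.
    rewrite vH; apply/forall_inP => w wW; have [y yY0 wy] := Wnbr w wW.
    by rewrite e_sym (outer_nbr_nonadj_root (negbT (disjointFr dWH wW)) yY0 wy).
  have [xH _ _] := layer3P xZ; rewrite xH; apply/forall_inP => w wW.
  have [y yY0 wy] := Wnbr w wW.
  by rewrite e_sym (outer_nbr_nonadj_layer3 (negbT (disjointFr dWH wW)) yY0 wy).
have JB : J \subset ball2.
  apply: subset_trans JS _; apply/subsetP => x /setU1P [->|/setUP [/layer1_ball2 //|]].
    exact: root_in_ball2.
  by case/dead_endP => /layer2_ball2.
have bound := local_exchange_bound e_sym e_irr HG0 H_closed awc dWH indW anchorA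
  (anchor_independent W) ball2_sub (@anchor_dominates W) JB indJ.
suff : #|J| <= #|anchor W :&: ball2| + 1 by have := card_anchor_ball2 W; lia.
apply: bound => j u jJ /setDP [uH uR] ju.
by rewrite (ball2_nbr (subsetP JS j jJ) uH ju) in uR.
Qed.

Lemma avoiding_nbr (W : {set T}) y w : w \in W -> e y w -> y \notin avoiding e H W.
Proof. by move=> wW yw; rewrite inE negb_and; apply/orP; right; apply/forall_inPn; exists w; rewrite ?yw. Qed.

(* [y] is not in [Uset]: its component contains the non-adjacent vertices [v]
   and [y]; as an internal vertex of type 0 it has a second neighbour besides [x]. *)
Lemma dead_end_outer_nbr y : y \in dead_ends -> exists2 w, w \notin H & e y w.
Proof.
move=> yY0; have [yY yend] := dead_endP yY0.
have [yH yv yX [x xX xy]] := layer2P yY.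
have [xH vx] := layer1P xX.
have yU : y \notin Uset e.
  rewrite inE; apply/forall_inPn; exists v.
    rewrite inE; apply: (connect_trans (y := x)); apply: connect1;
      by rewrite /restr !in_setT // e_sym.
  apply/forall_inPn; exists y; first by rewrite inE connect0.
  by rewrite negb_imply eq_sym yv /=; apply: contra yX => vy; rewrite inE yH vy.
have := subsetP HG0 y yH; rewrite inE /is_type (negbTE yU) /= => /andP [/andP [_ deg1] _].
have xN : x \in [set u in ~: Uset e | e y u].
  by rewrite in_set in_setC (Uset_edge e_sym xy) yU e_sym xy.
have : 0 < #|[set u in ~: Uset e | e y u] :\ x|.
  by move: deg1; rewrite /degGU (cardsD1 x) xN; case: #|_|.
case/card_gt0P => u; rewrite in_setD1 in_set => /andP [ux /andP [_ yu]].
exists u => //; apply/negP => uH.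
by apply: (layer1_common_nbr xX (yend u uH yu) xy (_ : e u y) yv); rewrite 1?e_sym // eq_sym.
Qed.

(* Adjacent outer neighbours of two dead ends would close a 5- or 7-cycle. *)
Lemma dead_ends_outer_cover y1 y2 : y1 \in dead_ends -> y2 \in dead_ends -> y1 != y2 ->
  exists W : {set T}, [/\ [disjoint W & H], {in W, forall w, exists2 y, y \in dead_ends & e w y},
    independent e W, y1 \notin avoiding e H W & y2 \notin avoiding e H W].
Proof.
move=> y1Y0 y2Y0 y12.
have [w1 w1H y1w1] := dead_end_outer_nbr y1Y0.
have [w2 w2H y2w2] := dead_end_outer_nbr y2Y0.
have cover1 w : w \notin H -> e w y1 -> e w y2 -> exists W : {set T},
    [/\ [disjoint W & H], {in W, forall w, exists2 y, y \in dead_ends & e w y},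
      independent e W, y1 \notin avoiding e H W & y2 \notin avoiding e H W].
  move=> wH wy1 wy2; exists [set w]; split; rewrite ?disjoints1 ?independent1 //.
  - by move=> _ /set1P ->; exists y1.
  - by apply: (avoiding_nbr (set11 w)); rewrite e_sym.
  - by apply: (avoiding_nbr (set11 w)); rewrite e_sym.
case: (boolP (e w1 y2)) => [w1y2|w1y2]; first by apply: (cover1 w1) => //; rewrite e_sym.
case: (boolP (e w2 y1)) => [w2y1|w2y1]; first by apply: (cover1 w2) => //; rewrite e_sym.
have nw12 : ~~ e w1 w2.
  apply/negP => w12.
  have [y1Y _] := dead_endP y1Y0; have [y2Y _] := dead_endP y2Y0.
  have [y1H y1v y1X [x1 x1X x1y1]] := layer2P y1Y.
  have [y2H y2v y2X [x2 x2X x2y2]] := layer2P y2Y.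
  have [x1H vx1] := layer1P x1X; have [x2H vx2] := layer1P x2X.
  have y1R := layer2_ball2 y1Y; have y2R := layer2_ball2 y2Y.
  have x1R := layer1_ball2 x1X; have x2R := layer1_ball2 x2X; have vR := root_in_ball2.
  have [E|x12] := eqVneq x1 x2.
    subst x2; apply: (no_C5 e_sym e_irr free (_ : e w1 y1) (_ : e y1 x1) x2y2 y2w2 (_ : e w2 w1));
      rewrite 1?e_sym //; distinct_by_layers.
  apply: (no_C7 e_sym e_irr free (_ : e w1 y1) (_ : e y1 x1) (_ : e x1 v) vx2 x2y2 y2w2
    (_ : e w2 w1)); rewrite 1?e_sym //; distinct_by_layers.
exists [set w1; w2]; split.
- by rewrite disjoint_subset; apply/subsetP => w /set2P [->|->]; rewrite inE.
- by move=> w /set2P [->|->]; [exists y1 | exists y2]; rewrite // e_sym.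
- rewrite independentU ?independent1 // => _ _ /set1P -> /set1P ->; exact: nw12.
- by apply: (avoiding_nbr (setU11 w1 [set w2])).
- by apply: (avoiding_nbr (setU1r w1 (set11 w2))).
Qed.

Lemma free_root_or_layer1 :
  exists2 t, t \in v |: layer1 & t \notin dead_ends /\ {in dead_ends, forall y, ~~ e t y}.
Proof.
case: (boolP [forall x in layer1, exists y in dead_ends, e x y]) => [_|].
  exists v; first exact: setU11.
  split; first by apply: contra root_notin_layer2 => /dead_endP [].
  by move=> y /dead_endP [/layer2P [yH _ yX _] _]; apply: contra yX => vy; rewrite inE yH vy.
case/forall_inPn => x xX /exists_inPn xnbr; exists x; first by rewrite setU1r.
by split; first by apply: contraL xX => /dead_endP [/layer2P []].
Qed.

Lemma card_dead_ends_le1 : #|dead_ends| <= 1.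
Proof.
rewrite leqNgt; apply/negP => gt1; have /card_gt1P [y1 [y2 [y1Y0 y2Y0 y12]]] := gt1.
have [W [dWH Wnbr indW y1A y2A]] := dead_ends_outer_cover y1Y0 y2Y0 y12.
have [t tS [tY0 tnbr]] := free_root_or_layer1.
have JS : t |: dead_ends \subset v |: (layer1 :|: dead_ends).
  rewrite subUset sub1set; apply/andP; split.
    by case/setU1P: tS => [->|tX]; rewrite ?setU11 // setU1r // inE tX.
  by apply/subsetP => y yY0; rewrite setU1r // inE yY0 orbT.
have indJ : independent e (t |: dead_ends).
  rewrite independentU ?independent1 // => [|_ y /set1P -> /tnbr //].
  by apply: independentS layer2_independent; apply/subsetP => y /dead_endP [].
have avoid_Y0 : #|dead_ends :&: avoiding e H W| + 2 <= #|dead_ends|.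
  have sub2 : [set y1; y2] \subset dead_ends by apply/subsetP => u /set2P [->|->].
  rewrite -(cardsID [set y1; y2] dead_ends) (setIidPr sub2) cards2 y12 addnC leq_add2l.
  apply/subset_leq_card/subsetP => u /setIP [uY0 uA]; rewrite in_setD uY0 andbT in_set2.
  by apply/negP => /orP [] /eqP uy; [rewrite -uy uA in y1A | rewrite -uy uA in y2A].
have := leq_trans (layer_bound dWH Wnbr indW JS indJ) avoid_Y0.
by rewrite cardsU1 tY0 ltnn.
Qed.

Lemma card_layer1_le2 : #|layer1| <= 2.
Proof.
have JS : layer1 \subset v |: (layer1 :|: dead_ends).
  by apply/subsetP => x xX; rewrite setU1r // inE xX.
have := card_dead_ends_le1; rewrite leq_eqVlt ltnS leqn0 => /orP [/cards1P [y Y0y]|/eqP/cards0_eq Y0_0].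
  have yY0 : y \in dead_ends by rewrite Y0y set11.
  have [yY _] := dead_endP yY0; have [yH yv yX [x xX xy]] := layer2P yY.
  have [w wH yw] := dead_end_outer_nbr yY0.
  have JS' : y |: (layer1 :\ x) \subset v |: (layer1 :|: dead_ends).
    rewrite subUset sub1set (subset_trans (subsetDl _ _) JS) andbT.
    by rewrite setU1r // in_setU yY0 orbT.
  have indJ : independent e (y |: (layer1 :\ x)).
    rewrite independentU ?independent1 ?(independentS (subsetDl _ _) layer1_independent) //.
    move=> _ x' /set1P -> /setD1P [x'x x'X]; apply/negP => yx'.
    by apply: (layer1_common_nbr xX x'X xy (_ : e x' y) yv); rewrite 1?e_sym // eq_sym.
  have dWH : [disjoint [set w] & H] by rewrite disjoints1.
  have := layer_bound dWH _ (independent1 e_irr w) JS' indJ.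
  have -> : dead_ends :&: avoiding e H [set w] = set0.
    apply/setP => u; rewrite Y0y in_setI in_set1 in_set0; case: (eqVneq u y) => //= ->.
    by apply/negbTE/(avoiding_nbr (set11 w)).
  rewrite cards0 cardsU1 in_setD1 (negbTE yX) andbF (cardsD1 x layer1) xX /= => bound.
  by apply: bound => _ /set1P ->; exists y; rewrite // e_sym.
have dH : [disjoint set0 & H] by rewrite disjoints_subset sub0set.
have Wnbr : {in set0, forall w, exists2 y, y \in dead_ends & e w y} by move=> w; rewrite inE.
have := layer_bound dH Wnbr (independent0 e) JS layer1_independent.
by rewrite Y0_0 set0I cards0.
Qed.

End Layers.

Lemma cyc_adj_lt n i j : i < j -> j < n ->
  cyc_adj n i j = (j == i.+1) || (i == 0) && (j == n.-1).
Proof.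
move=> ij jn; rewrite /cyc_adj (modn_small (_ : i.+1 < n)); last lia.
have [jE|jn1] := eqVneq j n.-1.
  rewrite jE prednK ?modnn; last lia.
  by case: (eqVneq i 0) => [->|i0]; rewrite ?orbT // !orbF; apply/eqP; lia.
rewrite modn_small ?andbF ?orbF; last lia.
by rewrite (_ : i == j.+1 = false) ?orbF //; apply/eqP; lia.
Qed.

Lemma cyc_adj_path n i j : i < n.-1 -> j < n.-1 -> cyc_adj n i j = path_adj i j.
Proof. by move=> ? ?; rewrite /cyc_adj /path_adj !modn_small //; lia. Qed.

Section LongestPath.
Variables (T : finType) (e : rel T).
Hypothesis e_sym : symmetric e.
Hypothesis e_irr : irreflexive e.

Variables (H : {set T}) (x0 : T) (p : seq T).
Local Notation q := (nth x0 p).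
Local Notation n := (size p).
Hypothesis p_uniq : uniq p.
Hypothesis p_sub : {subset p <= H}.
Hypothesis p_gt0 : 0 < n.
Hypothesis p_path : forall i, i.+1 < n -> e (q i) (q i.+1).
Hypothesis H_deg2 : forall u, u \in H -> #|[set w in H | e u w]| <= 2.
Hypothesis p_ends_max : {in H, forall u, e (q 0) u || e (q n.-1) u -> u \in p}.

Lemma nth_p_inj i j : i < n -> j < n -> (q i == q j) = (i == j).
Proof. by move=> ? ?; rewrite nth_uniq. Qed.

Lemma nth_p_in_H i : i < n -> q i \in H.
Proof. by move=> ?; apply/p_sub/mem_nth. Qed.

Lemma interior_nbr k u : 0 < k -> k.+1 < n -> u \in H -> e (q k) u ->
  u = q k.-1 \/ u = q k.+1.
Proof.
move=> k0 kn uH ku.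
have [->|u1] := eqVneq u (q k.-1); first by left.
have [->|u2] := eqVneq u (q k.+1); first by right.
have sub : [set q k.-1; q k.+1; u] \subset [set w in H | e (q k) w].
  apply/subsetP => w; rewrite !inE => /orP [/orP [/eqP ->|/eqP ->]|/eqP ->].
  - rewrite nth_p_in_H /=; last lia.
    by rewrite e_sym; have := p_path (i := k.-1); rewrite prednK //; apply; apply: ltnW.
  - by rewrite nth_p_in_H ?p_path.
  - by rewrite uH ku.
have := leq_trans (subset_leq_card sub) (H_deg2 (nth_p_in_H (ltnW kn))).
rewrite -setUA cardsU1 cards2 !inE negb_or nth_p_inj; try lia.
by rewrite ![_ == u]eq_sym (negbTE u1) (negbTE u2) (_ : k.-1 == k.+1 = false) //; lia.
Qed.

Lemma nbr_mem_p k u : k < n -> u \in H -> e (q k) u -> u \in p.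
Proof.
move=> kn uH ku; have [k0|k0] := posnP k; first by subst k; apply: p_ends_max; rewrite ?ku.
have [kn'|kn'] := ltnP k.+1 n.
  case: (interior_nbr k0 kn' uH ku) => ->; apply: mem_nth => //.
  exact: leq_ltn_trans (leq_pred k) kn.
by apply: p_ends_max; rewrite // (_ : n.-1 = k) ?ku ?orbT //; lia.
Qed.

Lemma adj_nth_lt i j : i < j -> j < n ->
  e (q i) (q j) = (j == i.+1) || [&& i == 0, j == n.-1 & e (q 0) (q n.-1)].
Proof.
move=> ij jn.
have [E|ji] /= := eqVneq j i.+1; first by subst j; exact: p_path.
apply/idP/idP => [eij|]; last by case/and3P => /eqP -> /eqP ->.
have [jn'|jn'] := ltnP j.+1 n.
  have j0 : 0 < j by lia.
  have := interior_nbr j0 jn' (nth_p_in_H (ltn_trans ij jn)) (etrans (e_sym _ _) eij).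
  by case=> /eqP; rewrite nth_p_inj; lia.
have [i0|i0] := posnP i; first by rewrite i0 (_ : j = n.-1) in eij * => //; lia.
have i1 : i.+1 < n by lia.
have := interior_nbr i0 i1 (nth_p_in_H jn) eij.
by case=> /eqP; rewrite nth_p_inj; lia.
Qed.

Lemma p_induces_path : ~~ (e (q 0) (q n.-1) && (2 < n)) ->
  forall i j, i < n -> j < n -> e (q i) (q j) = path_adj i j.
Proof.
move=> open.
have lt i j : i < j -> j < n -> e (q i) (q j) = (j == i.+1).
  move=> ij jn; rewrite adj_nth_lt //; case: eqP => //= ji.
  by apply/and3P => [[/eqP i0 /eqP jn1 cl]]; move: open; rewrite cl /=; lia.
move=> i j iN jN; rewrite /path_adj.
have [ij|ji|<-] := ltngtP i j.
- by rewrite lt // (_ : i == j.+1 = false) ?orbF //; apply/eqP; lia.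
- by rewrite e_sym lt // (_ : j == i.+1 = false) //; apply/eqP; lia.
- by rewrite e_irr; apply/esym/norP; split; apply/eqP; lia.
Qed.

Lemma p_induces_cycle : e (q 0) (q n.-1) -> 2 < n ->
  forall i j, i < n -> j < n -> e (q i) (q j) = cyc_adj n i j.
Proof.
move=> closed n2.
have lt i j : i < j -> j < n -> e (q i) (q j) = cyc_adj n i j.
  by move=> ij jn; rewrite adj_nth_lt // cyc_adj_lt // closed andbT.
move=> i j iN jN; have [ij|ji|<-] := ltngtP i j.
- exact: lt.
- by rewrite e_sym lt // /cyc_adj orbC.
- rewrite e_irr /cyc_adj orbb; apply/esym/eqP => ii.
  have [iN'|iN'] := ltnP i.+1 n; first by move: ii; rewrite modn_small //; lia.
  by move: ii; rewrite (_ : i.+1 = n) ?modnn //; lia.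
Qed.

End LongestPath.

Section Components.
Variables (T : finType) (e : rel T).
Hypothesis e_sym : symmetric e.
Hypothesis e_irr : irreflexive e.

Definition induced_by (x0 : T) (H : {set T}) (p : seq T) (A : nat -> nat -> bool) :=
  [/\ uniq p, H =i p &
    forall i j, i < size p -> j < size p -> e (nth x0 p i) (nth x0 p j) = A i j].

Lemma induced_by_iso x0 H p A : induced_by x0 H p A -> induced_iso e H (size p) A.
Proof.
case=> p_uniq Hp adj; exists (fun i : 'I_(size p) => nth x0 p i); split => [i j /eqP||i j].
- by rewrite nth_uniq // => /eqP /val_inj.
- apply/setP => u; rewrite Hp; apply/idP/imsetP => [up|[i _ ->]]; last exact: mem_nth.
  have ip : index u p < size p by rewrite index_mem.
  by exists (Ordinal ip); rewrite ?inE //= nth_index.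
- exact: adj.
Qed.

Lemma mem_comp_in (S : {set T}) x : x \in comp_in e S x.
Proof. by rewrite inE connect0. Qed.

Lemma comp_in_sub (S : {set T}) x : x \in S -> comp_in e S x \subset S.
Proof.
move=> xS; apply/subsetP => u; rewrite inE => /connectP [s + ->].
by case/lastP: s => [//|s y]; rewrite rcons_path last_rcons => /andP [_ /and3P []].
Qed.

Lemma comp_in_closed (S : {set T}) x h t :
  x \in S -> h \in comp_in e S x -> t \in S -> e h t -> t \in comp_in e S x.
Proof.
move=> xS hH tS ht; have hS := subsetP (comp_in_sub xS) h hH.
by move: hH; rewrite !inE => xh; apply: connect_trans xh (connect1 _); rewrite /restr hS tS.
Qed.

Definition simple_path (H : {set T}) (s : seq T) :=
  if s is a :: r then [&& uniq s, all (fun y => y \in H) s & path e a r] else false.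

Lemma simple_path_size H s : simple_path H s -> size s <= #|T|.
Proof. by case: s => [//|a r] /and3P [s_uniq _ _]; rewrite -(card_uniqP s_uniq) max_card. Qed.

Lemma exists_longest_simple_path (H : {set T}) x : x \in H ->
  exists2 p, simple_path H p & forall s, simple_path H s -> size s <= size p.
Proof.
move=> xH; pose P m := [exists t : m.-tuple T, simple_path H t].
have P1 : P 1 by apply/existsP; exists [tuple x]; rewrite /= xH.
have Pbound m : P m -> m <= #|T|.
  by case/existsP => t /simple_path_size; rewrite size_tuple.
case: (ex_maxnP (ex_intro P 1 P1) Pbound) => m /existsP [t pt] mmax.
exists t => // s ps; rewrite size_tuple; apply: mmax.
by apply/existsP; exists (in_tuple s).
Qed.

Lemma longest_simple_path_spec (H : {set T}) x0 p :
  simple_path H p -> (forall s, simple_path H s -> size s <= size p) ->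
  [/\ uniq p, {subset p <= H}, 0 < size p,
      forall i, i.+1 < size p -> e (nth x0 p i) (nth x0 p i.+1) &
      {in H, forall u, e (nth x0 p 0) u || e (nth x0 p (size p).-1) u -> u \in p}].
Proof.
move=> p_simple p_max.
have [a [r p_ar]] : exists a r, p = a :: r by case: (p) p_simple => [//|a r]; exists a, r.
move: p_simple; rewrite {1}p_ar => /and3P [p_uniq p_all p_path].
rewrite -p_ar in p_uniq p_all; split => //.
- exact/allP.
- by rewrite p_ar.
- by move=> i; rewrite p_ar; move/(pathP x0): p_path => /(_ i); apply.
move=> u uH /orP [au|au]; apply: contraT => up.
  have : simple_path H (u :: p).
    rewrite /simple_path cons_uniq up p_uniq [all _ _]/= uH p_all.
    by move: au; rewrite p_ar /= p_path andbT e_sym.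
  by move/p_max; rewrite ltnn.
have : simple_path H (rcons p u).
  rewrite nth_last p_ar /= in au.
  rewrite p_ar rcons_cons /simple_path -rcons_cons -p_ar rcons_uniq up p_uniq all_rcons uH.
  by rewrite p_all rcons_path p_path au.
by move/p_max; rewrite size_rcons ltnn.
Qed.

Section LongestInComponent.
Variables (S : {set T}) (x : T).
Hypothesis xS : x \in S.
Local Notation H := (comp_in e S x).
Hypothesis H_deg2 : forall u, u \in H -> #|[set w in H | e u w]| <= 2.

(* A longest path of the component can be extended at neither end, so with
   maximum degree 2 it is closed under adjacency and spans the component. *)
Lemma component_path_or_cycle : exists p,
  induced_by x H p path_adj \/ 2 < size p /\ induced_by x H p (cyc_adj (size p)).
Proof.
have [p p_simple p_max] := exists_longest_simple_path (mem_comp_in S x).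
have [p_uniq p_sub p_gt0 p_adj ends_max] := longest_simple_path_spec x p_simple p_max.
have nbr_p y z : y \in p -> z \in S -> e y z -> z \in p.
  move=> yp zS yz; have := nbr_mem_p e_sym p_uniq p_sub p_gt0 p_adj H_deg2 ends_max.
  move/(_ (index y p) z); rewrite index_mem nth_index //; apply=> //.
  exact: comp_in_closed xS (p_sub y yp) zS yz.
have p_closed : closed (restr e S) (mem p).
  move=> y z /and3P [yS zS yz] /=; apply/idP/idP => [yp|zp]; first exact: nbr_p yp zS yz.
  by apply: nbr_p zp yS _; rewrite e_sym.
have H_p : H =i p.
  have xp : x \in p.
    have [a p_a] : exists a, a \in p by case: (p) p_gt0 => [//|a r]; exists a; rewrite mem_head.
    by have := p_sub a p_a; rewrite inE => /(closed_connect p_closed) ->.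
  move=> u; apply/idP/idP => [|/p_sub //].
  by rewrite inE => /(closed_connect p_closed) <-.
exists p; case: (boolP (e (nth x p 0) (nth x p (size p).-1) && (2 < size p))) => [/andP [cl p2]|open].
  right; split => //; split => // i j.
  exact: (p_induces_cycle e_sym e_irr p_uniq p_sub p_gt0 p_adj H_deg2 cl p2).
left; split => // i j; exact: (p_induces_path e_sym e_irr p_uniq p_sub p_gt0 p_adj H_deg2 open).
Qed.

End LongestInComponent.

End Components.

Definition idx_independent (A : nat -> nat -> bool) (L : seq nat) :=
  all (fun i => all (fun j => ~~ A i j) L) L.
Definition idx_dominates (A : nat -> nat -> bool) (LC LR : seq nat) :=
  all (fun i => (i \in LC) || has (A i) LC) LR.

Section Lengths.
Variables (T : finType) (e : rel T).
Hypothesis e_sym : symmetric e.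
Hypothesis e_irr : irreflexive e.
Hypothesis awc : almost_well_covered e.

Variable H : {set T}.
Hypothesis HG0 : H \subset G0set e.
Hypothesis H_closed : forall h t, h \in H -> t \in G0set e -> e h t -> t \in H.

Section Prefix.
Variables (x0 : T) (p : seq T).
Local Notation q := (nth x0 p).
Hypothesis p_uniq : uniq p.
Hypothesis H_p : H =i p.

Lemma mem_map_nth (L : seq nat) i : i < size p -> all (fun k => k < size p) L ->
  (q i \in map q L) = (i \in L).
Proof.
move=> ip /allP Lp; apply/mapP/idP => [[j jL /eqP]|iL]; last by exists i.
by rewrite nth_uniq ?(Lp j jL) // => /eqP ->.
Qed.

Lemma card_map_nth (L : seq nat) : all (fun k => k < size p) L -> uniq L ->
  #|[set u in map q L]| = size L.
Proof.
move=> /allP Lp L_uniq; rewrite -(size_map q) -(card_uniqP _); last first.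
  by rewrite map_inj_in_uniq // => i j iL jL /eqP; rewrite nth_uniq ?Lp // => /eqP.
by apply: eq_card => u; rewrite inE.
Qed.

(* [LC] is an independent dominating set and [LJ] an independent set of the
   prefix [q 0, ..., q m.-1] of [p]; vertices of [H] beyond the prefix that are
   adjacent to [LJ] must be dominated by [LC]. *)
Lemma prefix_bound (B : nat -> nat -> bool) m (LC LJ : seq nat) :
  m <= size p -> (forall i j, i < m -> j < m -> e (q i) (q j) = B i j) ->
  uniq LC -> uniq LJ -> all (mem (iota 0 m)) LC -> all (mem (iota 0 m)) LJ ->
  idx_independent B LC -> idx_dominates B LC (iota 0 m) -> idx_independent B LJ ->
  (forall i k, i \in LJ -> m <= k < size p -> e (q i) (q k) ->
     exists2 c, c \in LC & e (q k) (q c)) ->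
  size LJ <= size LC + 1.
Proof.
move=> mp adj LC_uniq LJ_uniq /allP LC_LR /allP LJ_LR indC domC indJ Jout.
pose LR := iota 0 m.
have LRp i : i \in LR -> i < size p by rewrite mem_iota => /andP [_ im]; lia.
have adjLR : {in LR &, forall i j, e (q i) (q j) = B i j}.
  by move=> i j; rewrite !mem_iota /= !add0n => im jm; apply: adj.
have sub_p L : {subset L <= LR} -> all (fun k => k < size p) L.
  by move=> LLR; apply/allP => i /LLR /LRp.
pose img L := [set u in map q L].
have imgP L u : u \in img L -> exists2 i, i \in L & u = q i by rewrite inE => /mapP.
have imgH L : {subset L <= LR} -> img L \subset H.
  move=> LLR; apply/subsetP => u /imgP [i /LLR iLR ->].
  by rewrite H_p mem_nth ?LRp.
have img_indep L : {subset L <= LR} -> idx_independent B L -> independent e (img L).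
  move=> LLR /allP indL; apply/independentP => u w /imgP [i iL ->] /imgP [j jL ->].
  by rewrite adjLR ?LLR //; move/allP: (indL i iL); apply.
rewrite -(card_map_nth (sub_p _ LJ_LR) LJ_uniq) -(card_map_nth (sub_p _ LC_LR) LC_uniq).
apply: leq_trans (_ : _ <= #|img LC :&: img LR| + 1) _; last first.
  by rewrite leq_add2r subset_leq_card ?subsetIl.
have dH : [disjoint set0 & H] by rewrite disjoints_subset sub0set.
apply: (local_exchange_bound e_sym e_irr HG0 H_closed awc dH (independent0 e)).
- apply/subsetP => u uC; rewrite inE (subsetP (imgH _ LC_LR) u uC).
  by apply/forall_inP => w; rewrite inE.
- exact: img_indep.
- exact: imgH.
- move=> r /setIP [/imgP [i iR ->] _]; rewrite inE mem_map_nth ?LRp ?sub_p // => iC.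
  move/allP: domC => /(_ i iR); rewrite (negbTE iC) => /hasP [j jC Bij].
  exists (q j); first by rewrite inE map_f.
  by rewrite adjLR //; apply: LC_LR.
- by apply/subsetP => u /imgP [i /LJ_LR iR ->]; rewrite inE map_f.
- exact: img_indep.
- move=> u w /imgP [i iJ ->] /setDP [wH]; rewrite H_p in wH.
  rewrite -(nth_index x0 wH) inE mem_map_nth ?index_mem ?sub_p // mem_iota /=.
  rewrite add0n -leqNgt => mk /(Jout i _ iJ) [|c cC qc]; first by rewrite mk index_mem.
  by exists (q c); rewrite ?inE ?map_f.
Qed.

End Prefix.

(* In [P_n], n >= 11, the window [q 0, ..., q 10] has the independent dominating
   set {1, 4, 7, 10} and the independent set {0, 2, ..., 10}; similarly for [P_9],
   for the window [q 0, ..., q 12] of a cycle of length >= 14, and for [C_12]. *)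
Lemma path_length x0 p : 0 < size p -> induced_by e x0 H p path_adj ->
  size p \in [:: 1; 2; 3; 4; 5; 6; 7; 8; 10].
Proof.
move=> p_gt0 [p_uniq H_p adj].
have bound := prefix_bound p_uniq H_p (B := path_adj).
have adj_prefix m : m <= size p ->
    forall i j, i < m -> j < m -> e (nth x0 p i) (nth x0 p j) = path_adj i j.
  by move=> mp i j im jm; apply: adj; lia.
have lt11 : size p < 11.
  rewrite ltnNge; apply/negP => p11.
  suff : 6 <= 4 + 1 by [].
  apply: (bound x0 11 [:: 1; 4; 7; 10] [:: 0; 2; 4; 6; 8; 10] p11 (adj_prefix 11 p11)) => //.
  move=> i k /(allP (isT : all (fun i => i <= 10) [:: 0; 2; 4; 6; 8; 10])) i10 /andP [k11 kp].
  have ip : i < size p by lia.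
  rewrite adj // /path_adj => /orP [/eqP k_i|/eqP]; last lia.
  have -> : k = 11 by lia.
  by exists 10; rewrite // adj //; lia.
have ne9 : size p != 9.
  apply/negP => /eqP p9; suff : 5 <= 3 + 1 by [].
  apply: (bound x0 9 [:: 1; 4; 7] [:: 0; 2; 4; 6; 8] _ (adj_prefix 9 _)); rewrite ?p9 //.
  by move=> i k _ /andP [k9 k9']; lia.
by move: p_gt0 lt11 ne9; case: (size p) => [|[|[|[|[|[|[|[|[|[|[|n]]]]]]]]]]].
Qed.

Hypothesis free : forall k, k \in [:: 3; 4; 5; 7] -> ~ has_induced e k (cyc_adj k).

Lemma cycle_length x0 p : 2 < size p -> induced_by e x0 H p (cyc_adj (size p)) ->
  size p \in [:: 6; 8; 9; 10; 11; 13].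
Proof.
move=> p2 p_induced; have [p_uniq H_p adj] := p_induced.
have bound := prefix_bound p_uniq H_p.
have lt14 : size p < 14.
  rewrite ltnNge; apply/negP => p14.
  have adj_prefix i j : i < 13 -> j < 13 -> e (nth x0 p i) (nth x0 p j) = path_adj i j.
    by move=> i13 j13; rewrite adj ?cyc_adj_path //; lia.
  suff : 7 <= 5 + 1 by [].
  apply: (bound x0 path_adj 13 [:: 0; 3; 6; 9; 12] [:: 0; 2; 4; 6; 8; 10; 12] _ adj_prefix);
    rewrite //; first lia.
  move=> i k /(allP (isT : all (fun i => i <= 12) [:: 0; 2; 4; 6; 8; 10; 12])) i12.
  case/andP => k13 kp; have ip : i < size p by lia.
  rewrite adj // cyc_adj_lt //; last by lia.
  case/orP => [/eqP k_i|/andP [_ /eqP k_last]].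
    have -> : k = 13 by lia.
    have p12 : 12 < size p by lia.
    by exists 12; rewrite // e_sym adj // cyc_adj_lt.
  have p0 : 0 < size p by lia.
  exists 0; rewrite // e_sym adj // cyc_adj_lt // k_last; last lia.
  by apply/orP; right; apply/andP; split.
have ne12 : size p != 12.
  apply/negP => /eqP p12; suff : 6 <= 4 + 1 by [].
  rewrite p12 in adj.
  apply: (bound x0 (cyc_adj 12) 12 [:: 0; 3; 6; 9] [:: 0; 2; 4; 6; 8; 10] _ adj); rewrite ?p12 //.
  by move=> i k _ /andP [k12 k12']; lia.
have not_small : size p \notin [:: 3; 4; 5; 7].
  apply/negP => small; have [f [f_inj _ f_adj]] := induced_by_iso p_induced.
  by apply: (free small); exists f.
by move: p2 lt14 ne12 not_small; case: (size p) => [|[|[|[|[|[|[|[|[|[|[|[|[|[|n]]]]]]]]]]]]]].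
Qed.

End Lengths.

Unset Implicit Arguments.

Theorem corollary20 (T : finType) (e : rel T)
  (e_sym : symmetric e) (e_irr : irreflexive e)
  (free : forall k, k \in [:: 3; 4; 5; 7] -> ~ has_induced e k (cyc_adj k))
  (awc : almost_well_covered e)
  (no_type2 : forall x, ~~ is_type e x 2) :
  forall x, x \in G0set e ->
    exists n,
      (n \in [:: 1; 2; 3; 4; 5; 6; 7; 8; 10] /\
         induced_iso e (comp_in e (G0set e) x) n path_adj) \/
      (n \in [:: 6; 8; 9; 10; 11; 13] /\
         induced_iso e (comp_in e (G0set e) x) n (cyc_adj n)).
Proof.
move=> x xG0; set H := comp_in e (G0set e) x.
have HG0 : H \subset G0set e := comp_in_sub e xG0.
have H_closed h t : h \in H -> t \in G0set e -> e h t -> t \in H := comp_in_closed xG0.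
have H_deg2 u : u \in H -> #|[set w in H | e u w]| <= 2.
  by move=> uH; apply: (card_layer1_le2 e_sym e_irr free uH awc HG0 H_closed).
have [p [path_p|[p2 cycle_p]]] := component_path_or_cycle e_sym e_irr xG0 H_deg2.
  exists (size p); left; split; last exact: induced_by_iso path_p.
  have [_ H_p _] := path_p.
  apply: (path_length e_sym e_irr awc HG0 H_closed _ path_p).
  have xp : x \in p by rewrite -H_p mem_comp_in.
  by case: (p) xp.
exists (size p); right; split; last exact: induced_by_iso cycle_p.
exact: (cycle_length e_sym e_irr awc HG0 H_closed free p2 cycle_p).
Qed.
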